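(* Let $F$ be a generic, supertransversal fully-connected ReLU network with input dimension $n_0$, and let $C$ be a $k$-dimensional cell of $\mathcal{C}(F)$. Then the sign sequence $s(C)$ has exactly $n_0-k$ entries equal to zero; that is, $C$ is contained in the intersection of exactly $n_0-k$ bent hyperplanes.
   Context: A ReLU network of architecture $(n_0,\dots,n_m,1)$: affine maps $A_i:\mathbb{R}^{n_{i-1}}\to\mathbb{R}^{n_i}$, $1\le i\le m+1$, $n_{m+1}=1$; $F_i=\mathrm{ReLU}\circ A_i$ ($i\le m$), $G=A_{m+1}$, $F=G\circ F_m\circ\cdots\circ F_1$, $F_{(k)}=F_k\circ\cdots\circ F_1$ ($F_{(0)}=\mathrm{id}$), $F^{(k)}=G\circ F_m\circ\cdots\circ F_k:\mathbb{R}^{n_{k-1}}\to\mathbb{R}$ ($F^{(m+1)}=G$). Node maps $F_{ij}=\pi_j\circ A_i\circ F_{(i-1)}$, $1\le i\le m+1$, $1\le j\le n_i$; $N=n_1+\dots+n_m+1$. A bent hyperplane is a set $F_{ij}^{-1}(0)$. Polyhedra are finite intersections of closed half-spaces; $C^\circ$ is the relative interior. $R^{(i)}$ is the polyhedral complex on $\mathbb{R}^{n_{i-1}}$ induced by the hyperplanes $H_{ij}=\{\pi_jA_i=0\}$, $1\le j\le n_i$ (cells: nonempty intersections of one choice among $\{\pi_jA_i\ge0\},\{\pi_jA_i\le0\},\{\pi_jA_i=0\}$ for each $j$). Canonical polyhedral complex: $\mathcal{C}(F_{(1)})=R^{(1)}$, $\mathcal{C}(F_{(k)})=\{C\cap F_{(k-1)}^{-1}(R)\neq\emptyset: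 C\in\mathcal{C}(F_{(k-1)}),R\in R^{(k)}\}$, $2\le k\le m+1$; $\mathcal{C}(F)$ is the last one. The same construction for $F^{(k)}$ gives $\mathcal{C}(F^{(k)})$ on $\mathbb{R}^{n_{k-1}}$, with $\mathcal{C}(F^{(m+1)})=R^{(m+1)}$. Sign sequence: $s_{ij}(C)=\mathrm{sgn}(F_{ij}(x))$ for $x\in C^\circ$. Generic: for every $i$, any $k$ of the hyperplanes $H_{i1},\dots,H_{in_i}$ intersect in an affine subspace of dimension $n_{i-1}-k$ (empty if $k>n_{i-1}$). A map affine on cells of a polyhedral complex $X$ is transverse on cells of $X$ to a submanifold $Z$ if its restriction to $C^\circ$ is transverse to $Z$ for every cell $C$ of $X$. Supertransversal: for every $1\le i\le m$, $F_i$ is transverse on cells of $R^{(i)}$ to the interior of every cell of $\mathcal{C}(F^{(i+1)})$. *)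

From HB Require Import structures.
From mathcomp Require Import all_boot all_order all_algebra.
From mathcomp Require Import boolp classical_sets reals.
Unset Printing Implicit Defensive.
Import Order.TTheory GRing.Theory Num.Theory.
Local Open Scope classical_set_scope.
Local Open Scope ring_scope.

Section Geometry.
Variables (R : realType) (p : nat).

Definition lin_span (T : set 'rV[R]_p) : set 'rV[R]_p :=
  [set v | exists (q : nat) (vs : 'I_q -> 'rV[R]_p) (a : 'I_q -> R),
      (forall i, T (vs i)) /\ v = \sum_(i < q) a i *: vs i].

Definition dir_span (S : set 'rV[R]_p) : set 'rV[R]_p :=
  lin_span [set v | exists x y, S x /\ S y /\ v = y - x].

Definition aff_hull (S : set 'rV[R]_p) : set 'rV[R]_p :=
  [set y | exists x, S x /\ dir_span S (y - x)].

Definition relint (S : set 'rV[R]_p) : set 'rV[R]_p :=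
  [set x | S x /\ exists e : R, 0 < e /\
     forall y, aff_hull S y -> (forall j, `|y ord0 j - x ord0 j| < e) -> S y].

Definition has_dim (S : set 'rV[R]_p) (k : nat) : Prop :=
  exists B : 'M[R]_(k, p), row_free B /\ forall v, dir_span S v <-> (v <= B)%MS.

Definition affdim (S : set 'rV[R]_p) (k : nat) : Prop :=
  (exists x, S x) /\ has_dim S k.

End Geometry.
Arguments lin_span {R p}.
Arguments dir_span {R p}.
Arguments aff_hull {R p}.
Arguments relint {R p}.
Arguments has_dim {R p}.
Arguments affdim {R p}.

(* Transversality, on a cell C, of a map f that is affine on C, to a
   submanifold Z which is a relatively open subset of an affine subspace
   (the relative interior of a polyhedron): for every x in C° with f x in Z,
   the image of the differential of f|C° at x (= the direction space of the
   affine hull of f(C°), f being affine on C) plus the tangent space of Z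
   (= the direction space of the affine hull of Z) is the whole space. *)
Definition transverse_cell {R : realType} {p q : nat} (f : 'rV[R]_p -> 'rV[R]_q)
    (C : set 'rV[R]_p) (Z : set 'rV[R]_q) : Prop :=
  forall x, relint C x -> Z (f x) ->
    forall w : 'rV[R]_q, exists u v,
      dir_span (f @` relint C) u /\ dir_span Z v /\ w = u + v.

(* ReLU networks.  Layers are 0-indexed: the affine map of layer i     *)
(* (paper's A_{i+1}) goes from R^(n i) to R^(n i.+1),                  *)
(* x |-> x *m W i + b i; the network of architecture (n 0,...,n m, 1)  *)
(* uses layers 0..m, and layer m is G (no ReLU).                       *)
Section Network.
Variables (R : realType) (n : nat -> nat)
  (W : forall i, 'M[R]_(n i, n i.+1)) (b : forall i, 'rV[R]_(n i.+1)).

Definition affmap (i : nat) (x : 'rV[R]_(n i)) : 'rV[R]_(n i.+1) := x *m W i + b i.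

Definition relu {q : nat} (x : 'rV[R]_q) : 'rV[R]_q := map_mx (fun a => Num.max a 0) x.

Definition layer (i : nat) (x : 'rV[R]_(n i)) : 'rV[R]_(n i.+1) := relu (affmap i x).

Fixpoint Fpre (i : nat) : 'rV[R]_(n 0) -> 'rV[R]_(n i) :=
  match i return 'rV[R]_(n 0) -> 'rV[R]_(n i) with
  | 0 => id
  | i'.+1 => fun x => layer i' (Fpre i' x)
  end.

Fixpoint Fseg (s d : nat) : 'rV[R]_(n s) -> 'rV[R]_(n (d + s)) :=
  match d return 'rV[R]_(n s) -> 'rV[R]_(n (d + s)) with
  | 0 => id
  | d'.+1 => fun x => layer (d' + s) (Fseg s d' x)
  end.

Inductive hchoice := HGe | HLe | HEq.

Definition hcell (i : nat) (sg : 'I_(n i.+1) -> hchoice) : set 'rV[R]_(n i) :=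
  [set x | forall j, match sg j with
                     | HGe => is_true (0 <= affmap i x ord0 j)
                     | HLe => is_true (affmap i x ord0 j <= 0)
                     | HEq => affmap i x ord0 j = 0
                     end].

Definition Rarr (i : nat) : set (set 'rV[R]_(n i)) :=
  [set S | (exists sg, S = hcell i sg) /\ S !=set0].

(* cpx s t : canonical polyhedral complex of the composite of layers
   s, ..., s+t-1 (the last one taken without its ReLU), on R^(n s).
   cpx s 0 is the trivial complex {R^(n s)}, so cpx s 1 = Rarr s. *)
Fixpoint cpx (s t : nat) : set (set 'rV[R]_(n s)) :=
  match t with
  | 0 => [set setT]
  | t'.+1 => [set S | exists C Rc, cpx s t' C /\ Rarr (t' + s) Rc /\
                 S = C `&` (Fseg s t') @^-1` Rc /\ S !=set0]
  end.

Definition canon_cpx (m : nat) : set (set 'rV[R]_(n 0)) := cpx 0 m.+1.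

Definition node_map (i : nat) (j : 'I_(n i.+1)) (x : 'rV[R]_(n 0)) : R :=
  affmap i (Fpre i x) ord0 j.

(* s_{(i+1) j}(C) = 0 : F_{(i+1) j} vanishes on C° *)
Definition sign_zero (C : set 'rV[R]_(n 0)) (i : nat) (j : 'I_(n i.+1)) : Prop :=
  forall x, relint C x -> node_map i j x = 0.

Definition generic (m : nat) : Prop :=
  forall i, (i <= m)%N -> forall J : {set 'I_(n i.+1)},
    let X := [set x : 'rV[R]_(n i) | forall j, j \in J -> affmap i x ord0 j = 0] in
    if (#|J| <= n i)%N then affdim X (n i - #|J|)%N else X = set0.

(* supertransversal: for every paper-index 1 <= i <= m (here l = i-1 < m),
   F_i is transverse on cells of R^(i) to the interior of every cell of
   C(F^(i+1)) = cpx (l+1) (m - l)  (layers l+1, ..., m). *)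
Definition supertransversal (m : nat) : Prop :=
  forall l, (l < m)%N -> forall (C : set 'rV[R]_(n l)) (D : set 'rV[R]_(n l.+1)),
    Rarr l C -> cpx l.+1 (m - l) D -> transverse_cell (layer l) C (relint D).

End Network.
Arguments affmap {R n}.
Arguments layer {R n}.
Arguments Fpre {R n}.
Arguments Fseg {R n}.
Arguments hcell {R n}.
Arguments Rarr {R n}.
Arguments cpx {R n}.
Arguments canon_cpx {R n}.
Arguments node_map {R n}.
Arguments sign_zero {R n}.
Arguments generic {R n}.
Arguments supertransversal {R n}.

From HB Require Import structures.
From mathcomp Require Import all_boot all_order all_algebra.
From mathcomp Require Import boolp classical_sets reals.
From mathcomp Require Import zify ring lra.
Unset Printing Implicit Defensive.
Import Order.TTheory GRing.Theory Num.Theory.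
Local Open Scope classical_set_scope.
Local Open Scope ring_scope.

(* Choose a point [xs] of the cell [C] at which as few node maps as possible
   vanish; since the midpoint of two points of [C] is a zero of a node map
   only if both are, a node map then vanishes on [C] iff it vanishes at [xs].
   On [C] the network agrees with the affine network obtained by freezing the
   activation pattern of [xs]; hence [xs] lies in the relative interior of [C],
   and the direction space of [C] is the common kernel of the linear parts of
   the node maps vanishing at [xs]. These linear parts are linearly
   independent: going backwards through the layers, genericity lets one
   prescribe them on the vanishing units of the current layer, and
   supertransversality lets one prescribe the later ones without disturbing
   those. So [dim C] is [n_0] minus the number of vanishing node maps. *)

Section RowAt.
Context {R : pzRingType} {p : nat}.

(* [0] when [j] is out of range. *)
Definition row_at (v : 'rV[R]_p) (j : nat) : R :=
  \sum_(j' < p | val j' == j) v ord0 j'.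

Lemma row_atE v (j : 'I_p) : row_at v j = v ord0 j.
Proof. by rewrite /row_at (big_pred1 j) // => j'; rewrite /= -val_eqE. Qed.

Lemma row_atD v u j : row_at (v + u) j = row_at v j + row_at u j.
Proof. by rewrite /row_at -big_split; apply: eq_bigr => j' _; rewrite mxE. Qed.

Lemma row_atZ a v j : row_at (a *: v) j = a * row_at v j.
Proof. by rewrite /row_at mulr_sumr; apply: eq_bigr => j' _; rewrite mxE. Qed.

End RowAt.

Lemma fin_pos_lbound (R : realDomainType) (N : nat) (M : nat -> nat) (g : nat -> nat -> R) :
  (forall i j, (i < N)%N -> (j < M i)%N -> 0 < g i j) ->
  exists2 e, 0 < e & forall i j, (i < N)%N -> (j < M i)%N -> e <= g i j.
Proof.
move=> gpos.
pose e := \big[Order.min/1]_(p : {i : 'I_N & 'I_(M i)}) g (tag p) (tagged p).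
exists e; first by apply: lt_bigmin => // -[i j] _; apply: gpos.
move=> i j Hi Hj.
exact: (bigmin_le 1 (existT (fun i : 'I_N => 'I_(M i)) (Ordinal Hi) (Ordinal Hj))
  (fun p => g (tag p) (tagged p))).
Qed.

Section LinearAlgebra.
Context {R : fieldType}.

Lemma row_free_kernel_rank {k p q : nat} {B : 'M[R]_(k, p)} {A : 'M[R]_(p, q)} :
  row_free B -> (forall v : 'rV[R]_p, (v <= B)%MS <-> v *m A = 0) -> k = (p - \rank A)%N.
Proof.
move=> Bf HB; rewrite -mxrank_ker -(eqP Bf); apply: eqmx_rank.
apply/andP; split; apply/row_subP => i.
  by rewrite sub_kermx; apply/eqP; apply/HB; apply: row_sub.
by apply/HB/eqP; rewrite -sub_kermx row_sub.
Qed.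

Lemma surj_rank (p q : nat) (A : 'M[R]_(p, q)) :
  (forall beta : 'rV[R]_q, exists d : 'rV[R]_p, d *m A = beta) -> \rank A = q.
Proof.
move=> H; apply/eqP; change (row_full A); rewrite -sub1mx; apply/row_subP => i.
by have [d Hd] := H (row i 1%:M); apply/submxP; exists d.
Qed.

End LinearAlgebra.

Lemma dir_span_mono (R : realType) p (S T : set 'rV[R]_p) v :
  S `<=` T -> dir_span S v -> dir_span T v.
Proof.
move=> ST [q [vs [a [Hvs ->]]]]; exists q, vs, a; split => // k.
by have [x [y [Hx [Hy E]]]] := Hvs k; exists x, y; split; [apply: ST | split; [apply: ST|]].
Qed.

Section AffineZeroSet.
Context {R : realType} {p q : nat}.
Variables (M : 'M[R]_(p, q)) (c : 'rV[R]_q) (J : {set 'I_q}).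

Definition zero_set : set 'rV[R]_p := [set x | forall j, j \in J -> (x *m M + c) ord0 j = 0].

Definition colsJ : 'M[R]_(p, #|J|) := colsub (enum_val : 'I_#|J| -> 'I_q) M.

Lemma colsJE (u : 'rV[R]_p) k : (u *m colsJ) ord0 k = (u *m M) ord0 (enum_val k).
Proof. by rewrite mulmx_colsub mxE. Qed.

Lemma dir_span_zero_set {y} : zero_set y ->
  forall v, dir_span zero_set v <-> v *m colsJ = 0.
Proof.
move=> Hy v; split.
  move=> [r [vs [a [Hvs ->]]]]; rewrite mulmx_suml big1 // => k _.
  have [x [x' [Hx [Hx' ->]]]] := Hvs k; rewrite -scalemxAl.
  suff -> : (x' - x) *m colsJ = 0 by rewrite scaler0.
  apply/rowP => t; rewrite colsJE [RHS]mxE.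
  have := Hx _ (enum_valP t); have := Hx' _ (enum_valP t).
  by rewrite mulmxBl !mxE => H1 H2; lra.
move=> Hv; exists 1%N, (fun _ => v), (fun _ => 1); split; last by rewrite big_ord1 scale1r.
move=> _; exists y, (y + v); split => //; split; last by rewrite addrC addKr.
move=> j Hj; have Hvj : (v *m M) ord0 j = 0.
  by rewrite -(enum_rankK_in Hj Hj) -colsJE Hv mxE.
by rewrite mulmxDl addrAC mxE Hy // Hvj addr0.
Qed.

(* The zero set has codimension [#|J|], so the columns of [M] indexed by [J]
   are linearly independent. *)
Lemma zero_set_surj y : zero_set y -> has_dim zero_set (p - #|J|) -> (#|J| <= p)%N ->
  forall beta : 'I_q -> R, exists u : 'rV[R]_p, forall j, j \in J -> (u *m M) ord0 j = beta j.
Proof.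
move=> Hy [B [Bf HB]] HJ beta.
have Hk := row_free_kernel_rank Bf (fun v => iff_trans (iff_sym (HB v)) (dir_span_zero_set Hy v)).
have Hr : \rank colsJ = #|J| by have := rank_leq_col colsJ; have := rank_leq_row colsJ; lia.
have Hfull : row_full colsJ by rewrite /row_full Hr.
have [u Hu] := submxP (submx_full (\row_k beta (enum_val k)) Hfull).
exists u => j Hj; have := congr1 (fun A : 'rV[R]_#|J| => A ord0 (enum_rank_in Hj j)) Hu.
by rewrite /= colsJE mxE (enum_rankK_in Hj Hj) => ->.
Qed.

End AffineZeroSet.

Section Network.
Context {R : realType} {n : nat -> nat}
  (W : forall i, 'M[R]_(n i, n i.+1)) (b : forall i, 'rV[R]_(n i.+1)).

Lemma affmapD l (y u : 'rV[R]_(n l)) : affmap W b l (y + u) = affmap W b l y + u *m W l.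
Proof. by rewrite /affmap mulmxDl addrAC. Qed.

Definition node_out l (y : 'rV[R]_(n l)) (j : nat) : R := row_at (affmap W b l y) j.
Definition node_dout l (u : 'rV[R]_(n l)) (j : nat) : R := row_at (u *m W l) j.

Lemma node_outD l y u j : node_out l (y + u) j = node_out l y j + node_dout l u j.
Proof. by rewrite /node_out affmapD row_atD. Qed.

Lemma node_doutP l a u u' j :
  node_dout l (a *: u + u') j = a * node_dout l u j + node_dout l u' j.
Proof. by rewrite /node_dout mulmxDl -scalemxAl row_atD row_atZ. Qed.

(* Node (i, j) of the network with layer maps [lay], started at layer [l] on
   input [y] and run for at most [f] layers, read off by [out i] from the
   input of layer [i]; it is [0] unless [l <= i <= l + f]. *)
Fixpoint eval_node (lay : forall l, 'rV[R]_(n l) -> 'rV[R]_(n l.+1))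
    (out : forall l, 'rV[R]_(n l) -> nat -> R) (f l : nat) (y : 'rV[R]_(n l))
    (i j : nat) {struct f} : R :=
  if i == l then out l y j else
  if f is f'.+1 then eval_node lay out f' l.+1 (lay l y) i j else 0.

Section EvalNode.
Variables (lay : forall l, 'rV[R]_(n l) -> 'rV[R]_(n l.+1))
  (out : forall l, 'rV[R]_(n l) -> nat -> R).

Lemma eval_node_lt f l y i j : (i < l)%N -> eval_node lay out f l y i j = 0.
Proof.
elim: f l y => [|f IH] l y H /=; rewrite ifN ?IH //; try lia.
all: by apply/eqP; lia.
Qed.

Lemma eval_node_fuel f f' l y i j : (i <= l + f)%N -> (f <= f')%N ->
  eval_node lay out f l y i j = eval_node lay out f' l y i j.
Proof.
elim: f f' l y => [|f IH] [|f'] l y H1 H2 /=; try lia.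
- by [].
- by case: eqP => // Hne; rewrite eval_node_lt //; lia.
- by case: eqP => // Hne; apply: IH; lia.
Qed.

Lemma eval_node_here f l y j : eval_node lay out f l y l j = out l y j.
Proof. by case: f => [|f] /=; rewrite eqxx. Qed.

Lemma eval_node_next f l y i j : i != l ->
  eval_node lay out f.+1 l y i j = eval_node lay out f l.+1 (lay l y) i j.
Proof. by move=> H /=; rewrite (negbTE H). Qed.

End EvalNode.

Lemma eval_nodeD (lay1 lay2 : forall l, 'rV[R]_(n l) -> 'rV[R]_(n l.+1))
    (out1 out2 : forall l, 'rV[R]_(n l) -> nat -> R) :
  (forall l y u, lay1 l (y + u) = lay1 l y + lay2 l u) ->
  (forall l y u j, out1 l (y + u) j = out1 l y j + out2 l u j) ->
  forall f l y u i j, eval_node lay1 out1 f l (y + u) i j =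
    eval_node lay1 out1 f l y i j + eval_node lay2 out2 f l u i j.
Proof.
move=> Hl Ho; elim=> [|f IH] l y u i j /=; case: eqP => _ //; first by rewrite addr0.
by rewrite Hl IH.
Qed.

Lemma eval_nodeP (lay : forall l, 'rV[R]_(n l) -> 'rV[R]_(n l.+1))
    (out : forall l, 'rV[R]_(n l) -> nat -> R) :
  (forall l a u u', lay l (a *: u + u') = a *: lay l u + lay l u') ->
  (forall l a u u' j, out l (a *: u + u') j = a * out l u j + out l u' j) ->
  forall f l a u u' i j, eval_node lay out f l (a *: u + u') i j =
    a * eval_node lay out f l u i j + eval_node lay out f l u' i j.
Proof.
move=> Hl Ho; elim=> [|f IH] l a u u' i j /=; case: eqP => _ //.
  by rewrite mulr0 addr0.
by rewrite Hl IH.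
Qed.

Definition node_val := eval_node (layer W b) node_out.

(* [d i j] says whether unit [j] of layer [i] is active. *)
Definition mask (d : nat -> nat -> bool) l : 'M[R]_(n l.+1) :=
  diag_mx (\row_j ((d l j)%:R : R)).
Definition mlayer d l (y : 'rV[R]_(n l)) : 'rV[R]_(n l.+1) := affmap W b l y *m mask d l.
Definition dmlayer d l (u : 'rV[R]_(n l)) : 'rV[R]_(n l.+1) := u *m W l *m mask d l.

Definition node_aff d := eval_node (mlayer d) node_out.
Definition node_lin d := eval_node (dmlayer d) node_dout.

Lemma node_affD d f l y u i j :
  node_aff d f l (y + u) i j = node_aff d f l y i j + node_lin d f l u i j.
Proof.
apply: eval_nodeD => [l' y' u'|]; last exact: node_outD.
by rewrite /mlayer /dmlayer affmapD mulmxDl.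
Qed.

Lemma node_linP d f l a u u' i j :
  node_lin d f l (a *: u + u') i j = a * node_lin d f l u i j + node_lin d f l u' i j.
Proof.
apply: eval_nodeP => [l' a' v v'|]; last exact: node_doutP.
by rewrite /dmlayer !mulmxDl -!scalemxAl.
Qed.

Lemma node_lin0 d f l i j : node_lin d f l 0 i j = 0.
Proof. by have := node_linP d f l 1 0 0 i j; rewrite scale1r addr0 mul1r; lra. Qed.

Lemma node_linZ d f l a u i j : node_lin d f l (a *: u) i j = a * node_lin d f l u i j.
Proof. by rewrite -[a *: u]addr0 node_linP node_lin0 addr0. Qed.

Lemma node_linB d f l u u' i j :
  node_lin d f l (u - u') i j = node_lin d f l u i j - node_lin d f l u' i j.
Proof. by rewrite addrC -scaleN1r node_linP mulN1r addrC. Qed.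

Lemma node_linD d f l u u' i j :
  node_lin d f l (u + u') i j = node_lin d f l u i j + node_lin d f l u' i j.
Proof. by have := node_linP d f l 1 u u' i j; rewrite scale1r mul1r. Qed.

Lemma node_lin_sum d f l i j q (a : 'I_q -> R) (vs : 'I_q -> 'rV[R]_(n l)) :
  node_lin d f l (\sum_(k < q) a k *: vs k) i j =
  \sum_(k < q) a k * node_lin d f l (vs k) i j.
Proof.
elim: q a vs => [|q IH] a vs; first by rewrite !big_ord0 node_lin0.
by rewrite !big_ord_recr /= addrC node_linP IH addrC.
Qed.

Lemma node_lin_sub d f l y y' i j :
  node_lin d f l (y' - y) i j = node_aff d f l y' i j - node_aff d f l y i j.
Proof. by have := node_affD d f l y (y' - y) i j; rewrite (addrC y) subrK => ->; ring. Qed.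

Lemma node_lin_next d f l u i j : (l < i)%N -> (i <= l + f)%N ->
  node_lin d f l u i j = node_lin d f l.+1 (dmlayer d l u) i j.
Proof.
case: f => [|f] Hli Hi; first lia.
rewrite /node_lin eval_node_next; last by apply/eqP; lia.
by apply: eval_node_fuel; lia.
Qed.

(* ReLU acts on [v] as the identity if [on], as zero otherwise. *)
Definition msat (on : bool) (v : R) : Prop := if on then 0 <= v else v <= 0.

Lemma layer_mlayer (d : nat -> nat -> bool) l y :
  (forall j : 'I_(n l.+1), msat (d l j) (affmap W b l y ord0 j)) ->
  layer W b l y = mlayer d l y.
Proof.
move=> H; apply/rowP => j; move: (H j).
rewrite /layer /relu /mlayer /mask mul_mx_diag /msat !mxE; case: (d l j) => /= Hj.
  by rewrite mulr1 max_l.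
by rewrite mulr0 max_r.
Qed.

(* The sign condition on a layer is only required once the two networks are
   known to agree on it, so that it may be checked on either of them. *)
Lemma node_val_aff d f l y :
  (forall i, (l <= i < l + f)%N ->
     (forall j, node_val f l y i j = node_aff d f l y i j) ->
     forall j, (j < n i.+1)%N -> msat (d i j) (node_val f l y i j)) ->
  forall i j, (i <= l + f)%N -> node_val f l y i j = node_aff d f l y i j.
Proof.
rewrite /node_val /node_aff.
elim: f l y => [|f IH] l y H i j Hi /=; case: eqP => // Hne.
have Hl : layer W b l y = mlayer d l y.
  apply: layer_mlayer => j'.
  have := H l _ _ j' (ltn_ord j'); rewrite eval_node_here /node_out row_atE.
  by apply; [lia | move=> j0; rewrite !eval_node_here].
rewrite Hl; apply: IH; last lia.
move=> i' /andP[Hi1 Hi2] Hag j' Hj'.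
have Hne' : i' != l by apply/eqP; lia.
have Hag' : forall j0, eval_node (layer W b) node_out f.+1 l y i' j0 =
    eval_node (mlayer d) node_out f.+1 l y i' j0.
  by move=> j0; rewrite !eval_node_next // Hl; apply: Hag.
have := H i' _ Hag' j' Hj'; rewrite eval_node_next // Hl; apply.
by apply/andP; split; lia.
Qed.

Lemma node_val_Fpre f l x i j : (l <= i)%N -> (i <= l + f)%N ->
  node_val f l (Fpre W b l x) i j = node_out i (Fpre W b i x) j.
Proof.
rewrite /node_val; elim: f l => [|f IH] l H1 H2 /=; case: eqP => [->|Hne] //; try lia.
by apply: IH; lia.
Qed.

Lemma node_val_Fseg f s z d i j : (d <= f)%N -> (d + s <= i)%N ->
  node_val f s z i j = node_val (f - d) (d + s) (Fseg W b s d z) i j.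
Proof.
elim: d => [|d IH] Hd Hi; first by rewrite subn0.
rewrite IH; [|lia|lia].
have -> : (f - d = (f - d.+1).+1)%N by lia.
by rewrite /node_val eval_node_next //; apply/eqP; lia.
Qed.

Definition hsat (c : hchoice) (v : R) : Prop :=
  match c with HGe => is_true (0 <= v) | HLe => is_true (v <= 0) | HEq => v = 0 end.

Definition node_cell s f (sg : nat -> nat -> hchoice) : set 'rV[R]_(n s) :=
  [set y | forall i j, (s <= i)%N -> (i <= s + f)%N -> (j < n i.+1)%N ->
     hsat (sg i j) (node_val f s y i j)].

Definition seg_cell s t (sg : nat -> nat -> hchoice) : set 'rV[R]_(n s) :=
  [set z | forall d j, (d < t)%N -> (j < n (d + s).+1)%N ->
     hsat (sg d j) (node_out (d + s) (Fseg W b s d z) j)].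

Lemma seg_cell_ext s t sg sg' : (forall d j, (d < t)%N -> sg d j = sg' d j) ->
  seg_cell s t sg = seg_cell s t sg'.
Proof.
move=> E; apply: funext => z; apply: propext.
by split => H d j Hd Hj; move: (H d j Hd Hj); rewrite E.
Qed.

Lemma seg_cell0 s sg : seg_cell s 0 sg = setT.
Proof. by apply: funext => z; apply: propext; split => // _ d j Hd; lia. Qed.

Lemma seg_cellS s t sg : seg_cell s t.+1 sg =
  seg_cell s t sg `&` (Fseg W b s t) @^-1` (hcell W b (t + s) (fun j => sg t j)).
Proof.
apply: funext => z; apply: propext; split.
  move=> H; split; first by move=> d j Hd Hj; apply: H => //; lia.
  by move=> j; have := H t j (ltnSn t) (ltn_ord j); rewrite /node_out row_atE.
case=> H1 H2 d j Hd Hj; case: (ltngtP d t) => Hdt; [exact: H1 | lia |].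
subst d; have E := row_atE (affmap W b (t + s) (Fseg W b s t z)) (Ordinal Hj).
by rewrite /= in E; rewrite /node_out E; apply: (H2 (Ordinal Hj)).
Qed.

Lemma cpx_seg_cell s t S : cpx W b s t S -> exists sg, S = seg_cell s t sg.
Proof.
elim: t S => [|t IH] S /=; first by move=> ->; exists (fun _ _ => HEq); rewrite seg_cell0.
case=> C [Rc [/IH [sg0 ->] [[[sg ->] _] [-> _]]]].
exists (fun d j => if d == t then (if insub j is Some j' then sg j' else HEq) else sg0 d j).
rewrite seg_cellS; congr (_ `&` _).
  by apply: seg_cell_ext => d j Hd; rewrite ifN //; apply/eqP; lia.
by congr (_ @^-1` _); congr (hcell W b _ _); apply: funext => j; rewrite eqxx valK.
Qed.

Lemma seg_cell_cpx s t sg : seg_cell s t sg !=set0 -> cpx W b s t (seg_cell s t sg).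
Proof.
elim: t => [|t IH] [z Hz] /=; first by rewrite seg_cell0.
move: (Hz); rewrite seg_cellS => -[Hz1 Hz2].
exists (seg_cell s t sg), (hcell W b (t + s) (fun j => sg t j)).
split; first by apply: IH; exists z.
split; first by split; [exists (fun j => sg t j) | exists (Fseg W b s t z)].
by rewrite -seg_cellS; split; [|exists z].
Qed.

Lemma node_cell_seg s f sg : node_cell s f sg = seg_cell s f.+1 (fun d j => sg (d + s)%N j).
Proof.
have Eout d z j : (d <= f)%N -> node_val f s z (d + s) j = node_out (d + s) (Fseg W b s d z) j.
  by move=> Hd; rewrite (node_val_Fseg _ _ _ d) // /node_val eval_node_here.
apply: funext => y; apply: propext; split => H.
  by move=> d j Hd Hj; rewrite -Eout; [apply: H => //; lia | lia].
move=> i j H1 H2 Hj; have := H (i - s)%N j; rewrite -Eout; last lia.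
by rewrite subnK //; apply; lia.
Qed.

Lemma cpx_node_cell s t S : cpx W b s t.+1 S -> exists sg, S = node_cell s t sg.
Proof.
move=> /cpx_seg_cell [sg ->]; exists (fun i j => sg (i - s)%N j).
by rewrite node_cell_seg; apply: seg_cell_ext => d j _; rewrite addnK.
Qed.

Lemma node_cell_cpx s t sg : node_cell s t sg !=set0 -> cpx W b s t.+1 (node_cell s t sg).
Proof. by rewrite node_cell_seg; apply: seg_cell_cpx. Qed.

Lemma node_lin_bound d f l (u : 'rV[R]_(n l)) i j (e : R) : (forall r, `|u ord0 r| <= e) ->
  `|node_lin d f l u i j| <= e * \sum_(r < n l) `|node_lin d f l (delta_mx 0 r) i j|.
Proof.
move=> H; rewrite {1}(row_sum_delta u) node_lin_sum mulr_sumr.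
apply: le_trans (ler_norm_sum _ _ _) _; apply: ler_sum => r _.
by rewrite normrM ler_wpM2r.
Qed.

Lemma dir_span_node_lin d f l (S : set 'rV[R]_(n l)) i j v :
  (forall p q, S p -> S q -> node_lin d f l (q - p) i j = 0) ->
  dir_span S v -> node_lin d f l v i j = 0.
Proof.
move=> H [q [vs [a [Hvs ->]]]]; rewrite node_lin_sum big1 // => k _.
by have [p [p' [Hp [Hp' ->]]]] := Hvs k; rewrite H // mulr0.
Qed.

Definition hsign (v : R) : hchoice := if v == 0 then HEq else if 0 < v then HGe else HLe.

Lemma hsat_hsign v : hsat (hsign v) v.
Proof.
rewrite /hsign; case: eqP => // H; case: ifP => /= H'; first exact: ltW.
by rewrite leNgt H'.
Qed.

Lemma hsat_hsign0 v w : hsat (hsign v) w -> v = 0 -> w = 0.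
Proof. by move=> + E; rewrite E /hsign eqxx. Qed.

Lemma hsat_sgr c v w : hsat c v -> Num.sg w = Num.sg v -> hsat c w.
Proof.
case: c => /= Hv E; first by rewrite -sgr_ge0 E sgr_ge0.
  by rewrite -sgr_le0 E sgr_le0.
by apply/eqP; rewrite -sgr_eq0 E Hv sgr0.
Qed.

Lemma msat_sgr v w : Num.sg w = Num.sg v -> msat (0 < v) w.
Proof.
rewrite /msat; case: ltP => Hv E; first by rewrite ltW // -sgr_gt0 E sgr_gt0.
by rewrite -sgr_le0 E sgr_le0.
Qed.

Lemma msat_hsat c v w : hsat c v -> hsat c w -> (v = 0 -> w = 0) -> msat (0 < v) w.
Proof.
move=> Hv Hw Hz; rewrite /msat.
have [v0|v0] := eqVneq v 0; first by rewrite v0 ltxx Hz.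
case: c Hv Hw => /= Hv Hw; first by rewrite lt_def v0 Hv.
  by rewrite ltNge Hv.
by move: v0; rewrite Hv eqxx.
Qed.

Lemma sgr_add_small (a c : R) : `|c| < `|a| -> Num.sg (a + c) = Num.sg a.
Proof.
have [Ha|Ha|->] := ltrgtP a 0; last by rewrite normr0 ltNge normr_ge0.
  by rewrite (ltr0_norm Ha) ltr_norml => /andP[H1 H2]; rewrite !ltr0_sg //; lra.
by rewrite (gtr0_norm Ha) ltr_norml => /andP[H1 H2]; rewrite !gtr0_sg //; lra.
Qed.

Definition generic_pt s f sg (y : 'rV[R]_(n s)) : Prop :=
  node_cell s f sg y /\
  forall i j, (s <= i)%N -> (i <= s + f)%N -> (j < n i.+1)%N -> node_val f s y i j = 0 ->
    forall z, node_cell s f sg z -> node_val f s z i j = 0.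

Section GenericPoint.
Context {s f : nat} {sg : nat -> nat -> hchoice} {d : nat -> nat -> bool}
  {y0 : 'rV[R]_(n s)}.
Hypothesis gy0 : generic_pt s f sg y0.
Hypothesis hd : forall i j, (s <= i)%N -> (i <= s + f)%N -> (j < n i.+1)%N ->
  d i j = (0 < node_val f s y0 i j).

Lemma generic_pt_aff z : node_cell s f sg z ->
  forall i j, (i <= s + f)%N -> node_val f s z i j = node_aff d f s z i j.
Proof.
move=> Hz; apply: node_val_aff => i /andP[H1 H2] _ j Hj.
have H2' : (i <= s + f)%N by lia.
rewrite hd //; apply: msat_hsat (gy0.1 i j H1 H2' Hj) (Hz i j H1 H2' Hj) _.
by move=> H0; apply: (gy0.2 i j H1 H2' Hj H0 z Hz).
Qed.

Lemma sgr_aff_cell z :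
  (forall i j, (s <= i)%N -> (i <= s + f)%N -> (j < n i.+1)%N ->
     Num.sg (node_aff d f s z i j) = Num.sg (node_val f s y0 i j)) ->
  node_cell s f sg z.
Proof.
move=> H.
have E : forall i j, (i <= s + f)%N -> node_val f s z i j = node_aff d f s z i j.
  apply: node_val_aff => i /andP[H1 H2] Hag j Hj.
  by rewrite Hag hd; [apply: msat_sgr; apply: H | | |]; lia.
move=> i j H1 H2 Hj; rewrite E //.
exact: hsat_sgr (gy0.1 i j H1 H2 Hj) (H i j H1 H2 Hj).
Qed.

Lemma generic_pt_dir i j : (s <= i)%N -> (i <= s + f)%N -> (j < n i.+1)%N ->
  node_val f s y0 i j = 0 ->
  forall v, dir_span (node_cell s f sg) v -> node_lin d f s v i j = 0.
Proof.
move=> H1 H2 Hj H0 v; apply: dir_span_node_lin => p q Hp Hq.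
by rewrite node_lin_sub -!generic_pt_aff // !(gy0.2 i j H1 H2 Hj H0) // subrr.
Qed.

(* Short moves do not change the sign of the node maps not vanishing at [y0]. *)
Lemma generic_pt_move : exists2 e : R, 0 < e &
  forall u : 'rV[R]_(n s), (forall r, `|u ord0 r| <= e) ->
  (forall i j, (s <= i)%N -> (i <= s + f)%N -> (j < n i.+1)%N ->
     node_val f s y0 i j = 0 -> node_lin d f s u i j = 0) ->
  node_cell s f sg (y0 + u).
Proof.
pose K i j := \sum_(r < n s) `|node_lin d f s (delta_mx 0 r) i j|.
have K0 i j : 0 <= K i j by apply: sumr_ge0 => r _.
pose g i j := if node_val f s y0 i j == 0 then 1
              else `|node_val f s y0 i j| / (K i j + 1).
have [e e0 He] : exists2 e, 0 < e & forall i j, (i < (s + f).+1)%N -> (j < n i.+1)%N ->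
    e <= g i j.
  apply: fin_pos_lbound => i j _ _; rewrite /g; case: eqP => H //.
  by apply: divr_gt0; [rewrite normr_gt0; apply/eqP | have := K0 i j; lra].
exists e => // u Hu Hz; apply: sgr_aff_cell => i j H1 H2 Hj.
rewrite node_affD -generic_pt_aff //; last exact: gy0.1.
have [H0|H0] := eqVneq (node_val f s y0 i j) 0; first by rewrite H0 Hz // addr0.
apply: sgr_add_small.
have Hb := node_lin_bound d f s u i j e Hu.
have := He i j H2 Hj.
have Ka : 0 < `|node_val f s y0 i j| by rewrite normr_gt0.
rewrite /g (negbTE H0) ler_pdivlMr; last by have := K0 i j; lra.
by rewrite -/(K i j) in Hb; nra.
Qed.

Lemma generic_pt_relint : relint (node_cell s f sg) y0.
Proof.
split; first exact: gy0.1.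
have [e e0 He] := generic_pt_move.
exists e; split => // y [x' [Hx' Hdir]] Hclose.
have -> : y = y0 + (y - y0) by rewrite addrC subrK.
apply: He => [r|i j H1 H2 Hj H0]; first by rewrite !mxE ltW.
have -> : y - y0 = (y - x') - (y0 - x') by rewrite opprB addrA subrK.
rewrite node_linB (generic_pt_dir i j) // node_lin_sub -!generic_pt_aff //; last exact: gy0.1.
by rewrite H0 (gy0.2 i j H1 H2 Hj H0 x' Hx') !subrr.
Qed.

End GenericPoint.

Definition act_pattern f s (y : 'rV[R]_(n s)) i j : bool := 0 < node_val f s y i j.

Definition sign_cell s f (y : 'rV[R]_(n s)) : set 'rV[R]_(n s) :=
  node_cell s f (fun i j => hsign (node_val f s y i j)).

Lemma sign_cell_generic s f y : generic_pt s f (fun i j => hsign (node_val f s y i j)) y.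
Proof.
split => [i j _ _ _|i j H1 H2 Hj H0 z Hz]; first exact: hsat_hsign.
by apply: hsat_hsign0 H0; apply: Hz.
Qed.

Lemma sign_cell_relint s f y : relint (sign_cell s f y) y.
Proof. exact: (generic_pt_relint (d := act_pattern f s y) (sign_cell_generic s f y)). Qed.

Definition pos_choice (c : hchoice) : bool := if c is HGe then true else false.

Lemma msat_pos_choice c v : hsat c v -> msat (pos_choice c) v.
Proof. by rewrite /msat; case: c => //= ->. Qed.

Definition cell_mask (sg : nat -> nat -> hchoice) i j := pos_choice (sg i j).

Lemma node_cell_aff {s f sg z} : node_cell s f sg z ->
  forall i j, (i <= s + f)%N -> node_val f s z i j = node_aff (cell_mask sg) f s z i j.
Proof.
move=> Hz; apply: node_val_aff => i /andP[H1 H2] _ j Hj.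
by apply/msat_pos_choice/Hz => //; lia.
Qed.

Lemma hsat_mid c v w : hsat c v -> hsat c w -> hsat c (v + 2^-1 * (w - v)).
Proof. by case: c => /= Hv Hw; [lra | lra | rewrite Hv Hw; lra]. Qed.

Lemma hsat_mid0 {c v w} : hsat c v -> hsat c w -> v + 2^-1 * (w - v) = 0 -> v = 0 /\ w = 0.
Proof. by case: c => /= Hv Hw H; split; lra. Qed.

(* On a cell the network is affine, so node maps commute with midpoints. *)
Lemma node_cell_mid {s f sg x p} : node_cell s f sg x -> node_cell s f sg p ->
  forall i j, (i <= s + f)%N -> node_val f s (x + 2^-1 *: (p - x)) i j =
    node_val f s x i j + 2^-1 * (node_val f s p i j - node_val f s x i j).
Proof.
move=> Hx Hp.
have Eaff i j : node_aff (cell_mask sg) f s (x + 2^-1 *: (p - x)) i j =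
    node_aff (cell_mask sg) f s x i j +
    2^-1 * (node_aff (cell_mask sg) f s p i j - node_aff (cell_mask sg) f s x i j).
  by rewrite node_affD node_linZ node_lin_sub.
have E : forall i j, (i <= s + f)%N ->
    node_val f s (x + 2^-1 *: (p - x)) i j =
    node_aff (cell_mask sg) f s (x + 2^-1 *: (p - x)) i j.
  apply: node_val_aff => i /andP[H1 H2] Hag j Hj.
  rewrite Hag Eaff -?(node_cell_aff Hx) -?(node_cell_aff Hp); try lia.
  by apply/msat_pos_choice/hsat_mid; [apply: Hx | apply: Hp]; lia.
by move=> i j Hi; rewrite E // Eaff -(node_cell_aff Hx) // -(node_cell_aff Hp).
Qed.

Lemma generic_pt_step {s f sg x i j} : (s <= i)%N -> (i <= s + f)%N -> (j < n i.+1)%N ->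
  node_cell s f sg x -> exists x', node_cell s f sg x' /\
  (node_val f s x' i j = 0 -> forall z, node_cell s f sg z -> node_val f s z i j = 0) /\
  forall i' j', (s <= i')%N -> (i' <= s + f)%N -> (j' < n i'.+1)%N ->
    node_val f s x' i' j' = 0 -> node_val f s x i' j' = 0.
Proof.
move=> H1 H2 Hj Hx.
case: (pselect (forall z, node_cell s f sg z -> node_val f s z i j = 0)) => Hall.
  by exists x.
move: Hall => /existsNP [p /not_implyP [Hp Hpij]].
have Hmid := node_cell_mid Hx Hp.
exists (x + 2^-1 *: (p - x)); split; [|split].
- by move=> i' j' H1' H2' Hj'; rewrite Hmid //; apply: hsat_mid; [apply: Hx | apply: Hp].
- by rewrite Hmid // => /(hsat_mid0 (Hx i j H1 H2 Hj) (Hp i j H1 H2 Hj)) [_ /Hpij].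
- move=> i' j' H1' H2' Hj'; rewrite Hmid //.
  by move=> /(hsat_mid0 (Hx _ _ H1' H2' Hj') (Hp _ _ H1' H2' Hj')) [].
Qed.

Lemma exists_generic_pt s f sg : node_cell s f sg !=set0 -> exists y, generic_pt s f sg y.
Proof.
move=> [x0 Hx0].
pose T := {k : 'I_f.+1 & 'I_(n (s + k).+1)}.
have key (L : seq T) : exists x, node_cell s f sg x /\ forall e, e \in L ->
    node_val f s x (s + tag e) (tagged e) = 0 ->
    forall z, node_cell s f sg z -> node_val f s z (s + tag e) (tagged e) = 0.
  elim: L => [|e L [x [Hx HL]]]; first by exists x0.
  have He : (s + tag e <= s + f)%N by rewrite leq_add2l -ltnS.
  have [x' [Hx' [Hxe Hback]]] := generic_pt_step (leq_addr _ _) He (ltn_ord (tagged e)) Hx.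
  exists x'; split => // e'; rewrite inE => /orP[/eqP -> // | Le'] H0.
  have He' : (s + tag e' <= s + f)%N by rewrite leq_add2l -ltnS.
  exact: HL Le' (Hback _ _ (leq_addr _ _) He' (ltn_ord _) H0).
have [x [Hx HL]] := key (enum {: {k : 'I_f.+1 & 'I_(n (s + k).+1)}}).
exists x; split => // i j H1 H2; rewrite -(subnKC H1) in H2 *.
move: (i - s)%N H2 => k H2 Hj; have Hk : (k < f.+1)%N by rewrite ltnS -(leq_add2l s).
exact: (HL (existT (fun k : 'I_f.+1 => 'I_(n (s + k).+1)) (Ordinal Hk) (Ordinal Hj))
  (mem_enum _ _)).
Qed.

Definition sign_hcell l (y : 'rV[R]_(n l)) : set 'rV[R]_(n l) :=
  hcell W b l (fun j => hsign (affmap W b l y ord0 j)).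

Lemma sign_hcellE l y : sign_hcell l y = sign_cell l 0 y.
Proof.
have E (z : 'rV[R]_(n l)) (j : 'I_(n l.+1)) : node_val 0 l z l j = affmap W b l z ord0 j.
  by rewrite /node_val eval_node_here /node_out row_atE.
apply: funext => z; apply: propext; split => Hz.
  move=> i j H1 H2 Hj; have Ei : i = l by lia.
  by subst i; rewrite (E z (Ordinal Hj)) (E y (Ordinal Hj)); apply: (Hz (Ordinal Hj)).
by move=> j; have := Hz l j (leqnn l) (leq_addr 0 l) (ltn_ord j); rewrite !E.
Qed.

Lemma sign_hcell_Rarr l y : Rarr W b l (sign_hcell l y).
Proof.
split; first by exists (fun j => hsign (affmap W b l y ord0 j)).
by exists y => j; apply: hsat_hsign.
Qed.

Lemma node_map_node_val m (i : 'I_m.+1) (j : 'I_(n i.+1)) x :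
  node_map W b i j x = node_val m 0 x i j.
Proof.
have := node_val_Fpre m 0 x i j (leq0n _); rewrite add0n -ltnS => -> //.
by rewrite /node_out row_atE.
Qed.

(* On the sign cell of [yl] the layer is affine and keeps the vanishing units
   of [yl] at zero. *)
Lemma dir_span_layer_sign_hcell {d : nat -> nat -> bool} {l} {yl : 'rV[R]_(n l)}
    {S : set 'rV[R]_(n l)} {u} :
  (forall j : 'I_(n l.+1), d l j = (0 < affmap W b l yl ord0 j)) ->
  S `<=` sign_hcell l yl -> dir_span (layer W b l @` S) u ->
  exists w, u = dmlayer d l w /\
    forall j : 'I_(n l.+1), affmap W b l yl ord0 j = 0 -> (w *m W l) ord0 j = 0.
Proof.
move=> hd HS [q [vs [a [Hvs ->]]]].
have lin z : S z -> layer W b l z = mlayer d l z.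
  move=> /HS Hz; apply: layer_mlayer => j; rewrite hd.
  apply: msat_hsat (hsat_hsign _) (Hz j) _.
  exact: hsat_hsign0 (Hz j).
have Hk k : exists w, vs k = dmlayer d l w /\
    forall j : 'I_(n l.+1), affmap W b l yl ord0 j = 0 -> (w *m W l) ord0 j = 0.
  have [_ [_ [[z1 Hz1 <-] [[z2 Hz2 <-] ->]]]] := Hvs k.
  exists (z2 - z1); split.
    rewrite (lin z1 Hz1) (lin z2 Hz2) /mlayer /dmlayer -mulmxBl; congr (_ *m _).
    by rewrite /affmap mulmxBl opprD addrACA subrr addr0.
  move=> j Hj; have Z z : S z -> affmap W b l z ord0 j = 0.
    by move=> /HS Hz; apply: hsat_hsign0 (Hz j) Hj.
  by move: (Z z1 Hz1) (Z z2 Hz2); rewrite /affmap mulmxBl !mxE => ? ?; lra.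
have [w Hw] := fin_all_exists Hk.
exists (\sum_(k < q) a k *: w k); split.
  rewrite /dmlayer !mulmx_suml; apply: eq_bigr => k _.
  by rewrite (proj1 (Hw k)) /dmlayer !scalemxAl.
move=> j Hj; rewrite mulmx_suml summxE big1 // => k _.
by rewrite -scalemxAl mxE (proj2 (Hw k)) // mulr0.
Qed.

Section Surjectivity.
Variables (m : nat) (xs : 'rV[R]_(n 0)).
Hypotheses (gen : generic W b m) (st : supertransversal W b m).

Local Notation d := (act_pattern m 0 xs).

Lemma node_val_xs i j : (i <= m)%N -> node_val m 0 xs i j = node_out i (Fpre W b i xs) j.
Proof. by move=> Hi; rewrite node_val_Fpre. Qed.

Definition steerable l := forall al : nat -> nat -> R, exists u : 'rV[R]_(n l),
  forall i j, (l <= i)%N -> (i <= m)%N -> (j < n i.+1)%N -> node_val m 0 xs i j = 0 ->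
    node_lin d m l u i j = al i j.

Lemma zero_units_surj l : (l <= m)%N -> forall al : nat -> R, exists u : 'rV[R]_(n l),
  forall j, (j < n l.+1)%N -> node_val m 0 xs l j = 0 -> node_dout l u j = al j.
Proof.
move=> Hl al.
pose J := finset (fun j : 'I_(n l.+1) => node_val m 0 xs l j == 0).
have HJ : zero_set (W l) (b l) J (Fpre W b l xs).
  by move=> j; rewrite inE node_val_xs // /node_out row_atE => /eqP.
have [u Hu] : exists u : 'rV[R]_(n l), forall j, j \in J -> (u *m W l) ord0 j = al j.
  have := gen l Hl J; rewrite /=; case: ifP => HJn Hg.
    exact: zero_set_surj HJ Hg.2 HJn (fun j => al j).
  have Hg' : zero_set (W l) (b l) J = set0 := Hg.
  by move: HJ; rewrite Hg'.
exists u => j Hj H0; rewrite /node_dout (row_atE _ (Ordinal Hj)).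
by apply: Hu; rewrite inE; apply/eqP.
Qed.

Lemma later_zero_dir l v : (l < m)%N ->
  dir_span (relint (sign_cell l.+1 (m - l.+1) (Fpre W b l.+1 xs))) v ->
  forall i j, (l < i)%N -> (i <= m)%N -> (j < n i.+1)%N -> node_val m 0 xs i j = 0 ->
    node_lin d m l.+1 v i j = 0.
Proof.
move=> Hlm Hv i j H1 H2 Hj H0.
set z := Fpre W b l.+1 xs.
have Ez i' j' : (l < i')%N -> (i' <= m)%N ->
    node_val (m - l.+1) l.+1 z i' j' = node_val m 0 xs i' j'.
  by move=> H1' H2'; rewrite node_val_xs // node_val_Fpre //; lia.
rewrite /node_lin -(@eval_node_fuel _ _ (m - l.+1)); [|lia|lia].
apply: (generic_pt_dir (d := d) (sign_cell_generic _ _ z)); try lia.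
- by move=> i' j' H1' H2' _; rewrite /act_pattern Ez //; lia.
- by rewrite Ez.
- by apply: dir_span_mono Hv => y [].
Qed.

Lemma steerable_top : steerable m.
Proof.
move=> al; have [u Hu] := zero_units_surj m (leqnn m) (al m).
exists u => i j H1 H2 Hj H0; have Ei : i = m by lia.
by subst i; rewrite /node_lin eval_node_here; apply: Hu.
Qed.

(* Genericity steers the vanishing units of layer [l]. Supertransversality
   splits the correction [w] needed on the later layers into the image [u]
   of a move that leaves those units alone, and a direction [v] along the
   cell of the later layers, which their vanishing node maps do not see. *)
Lemma steerable_step l : (l < m)%N -> steerable l.+1 -> steerable l.
Proof.
move=> Hlm IH al.
have [u1 Hu1] := zero_units_surj l (ltnW Hlm) (al l).
have [w Hw] := IH (fun i j => al i j - node_lin d m l u1 i j).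
set yl := Fpre W b l xs.
set D := sign_cell l.+1 (m - l.+1) (Fpre W b l.+1 xs).
have relD : relint D (layer W b l yl) := sign_cell_relint _ _ _.
have HD : cpx W b l.+1 (m - l) D.
  have -> : (m - l = (m - l.+1).+1)%N by lia.
  by apply: node_cell_cpx; exists (layer W b l yl); exact: relD.1.
have relCl : relint (sign_hcell l yl) yl by rewrite sign_hcellE; apply: sign_cell_relint.
have [u [v [Hu [Hv Ew]]]] := st l Hlm _ _ (sign_hcell_Rarr l yl) HD yl relCl relD w.
have hd (j : 'I_(n l.+1)) : d l j = (0 < affmap W b l yl ord0 j).
  by rewrite /act_pattern node_val_xs ?(ltnW Hlm) // /node_out row_atE.
have [u0 [Eu Hu0]] := dir_span_layer_sign_hcell hd (fun z (Hz : relint _ z) => Hz.1) Hu.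
exists (u1 + u0) => i j H1 H2 Hj H0; case: (ltngtP l i) => Hli; last 1 first.
- subst i; rewrite /node_lin eval_node_here /node_dout mulmxDl row_atD.
  rewrite (row_atE (u0 *m W l) (Ordinal Hj)) Hu0 ?addr0; first exact: Hu1.
  by move: H0; rewrite node_val_xs ?(ltnW Hlm) // /node_out (row_atE _ (Ordinal Hj)).
- have Eu' : u = w - v by rewrite Ew addrK.
  rewrite node_linD (node_lin_next _ _ _ u0) -?Eu ?Eu' ?node_linB; try lia.
  by rewrite (later_zero_dir _ _ Hlm Hv) // subr0 Hw // addrC subrK.
- lia.
Qed.

Lemma steerable0 : steerable 0.
Proof.
suff H k : (k <= m)%N -> steerable (m - k) by rewrite -(subnn m); apply: H.
elim: k => [|k IH] Hk; first by rewrite subn0; exact: steerable_top.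
apply: steerable_step; first lia.
have -> : ((m - k.+1).+1 = m - k)%N by lia.
by apply: IH; lia.
Qed.

Section Dimension.
Variable sg : nat -> nat -> hchoice.
Hypothesis gxs : generic_pt 0 m sg xs.

Definition zero_nodes : {set {i : 'I_m.+1 & 'I_(n i.+1)}} :=
  finset (fun p : {i : 'I_m.+1 & 'I_(n i.+1)} => node_val m 0 xs (tag p) (tagged p) == 0).

Definition zero_lin_mx : 'M[R]_(n 0, #|zero_nodes|) :=
  \matrix_(r < n 0, c < #|zero_nodes|)
    node_lin d m 0 (delta_mx 0 r) (tag (enum_val c)) (tagged (enum_val c)).

Lemma zero_lin_mxE v (c : 'I_#|zero_nodes|) :
  (v *m zero_lin_mx) ord0 c = node_lin d m 0 v (tag (enum_val c)) (tagged (enum_val c)).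
Proof.
rewrite mxE [in RHS](row_sum_delta v) node_lin_sum.
by apply: eq_bigr => r _; rewrite mxE.
Qed.

Lemma zero_nodes_val (c : 'I_#|zero_nodes|) :
  node_val m 0 xs (tag (enum_val c)) (tagged (enum_val c)) = 0.
Proof. by have := enum_valP c; rewrite inE => /eqP. Qed.

Lemma tag_le (p : {i : 'I_m.+1 & 'I_(n i.+1)}) : (tag p <= m)%N.
Proof. by rewrite -ltnS. Qed.

Lemma node_nat_eq (p q : {i : 'I_m.+1 & 'I_(n i.+1)}) :
  ((tag p : nat) == tag q) && ((tagged p : nat) == tagged q) = (p == q).
Proof.
apply/andP/eqP => [[/eqP E1 /eqP E2]|->]; last by rewrite !eqxx.
by case: p q E1 E2 => i j [i' j'] /= /val_inj E; subst i' => /val_inj ->.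
Qed.

Lemma rank_zero_lin_mx : \rank zero_lin_mx = #|zero_nodes|.
Proof.
apply: surj_rank => beta.
pose al i j := \sum_(c < #|zero_nodes| | ((tag (enum_val c) : nat) == i) &&
  ((tagged (enum_val c) : nat) == j)) beta ord0 c.
have [u Hu] := steerable0 al.
exists u; apply/rowP => c; rewrite zero_lin_mxE Hu ?tag_le ?zero_nodes_val //.
by rewrite /al (big_pred1 c) // => c'; rewrite /= node_nat_eq (inj_eq enum_val_inj).
Qed.

Let hd i j : (0 <= i)%N -> (i <= 0 + m)%N -> (j < n i.+1)%N ->
  d i j = (0 < node_val m 0 xs i j).
Proof. by []. Qed.

Lemma zero_lin_mx_ker v : v *m zero_lin_mx = 0 ->
  forall i j, (i <= m)%N -> (j < n i.+1)%N -> node_val m 0 xs i j = 0 ->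
    node_lin d m 0 v i j = 0.
Proof.
move=> Hv i j Hi Hj H0; have Hi' : (i < m.+1)%N by [].
pose p := existT (fun i : 'I_m.+1 => 'I_(n i.+1)) (Ordinal Hi') (Ordinal Hj).
have pS : p \in zero_nodes by rewrite inE; apply/eqP.
have := congr1 (fun M : 'rV[R]_#|zero_nodes| => M ord0 (enum_rank_in pS p)) Hv.
by rewrite /= zero_lin_mxE (enum_rankK_in pS pS) mxE.
Qed.

Lemma dir_span_cell v : dir_span (node_cell 0 m sg) v <-> v *m zero_lin_mx = 0.
Proof.
split => [Hv|Hv].
  apply/rowP => c; rewrite zero_lin_mxE mxE.
  exact: (generic_pt_dir gxs hd) (tag_le _) (ltn_ord _) (zero_nodes_val c) v Hv.
have [e e0 He] := generic_pt_move gxs hd.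
pose S := \sum_r `|v ord0 r|.
have S0 : 0 <= S by apply: sumr_ge0.
pose t := e / (S + 1).
have t0 : 0 < t by apply: divr_gt0 => //; lra.
have Hy : node_cell 0 m sg (xs + t *: v).
  apply: He => [r|i j _ Hi Hj H0]; last by rewrite node_linZ zero_lin_mx_ker ?mulr0.
  have Hr : `|v ord0 r| <= S by rewrite /S (bigD1 r) //= lerDl sumr_ge0.
  rewrite mxE normrM (gtr0_norm t0) /t mulrAC ler_pdivrMr; last lra.
  by rewrite ler_wpM2l ?(ltW e0) //; lra.
exists 1%N, (fun _ => (xs + t *: v) - xs), (fun _ => t^-1); split.
  by move=> _; exists xs, (xs + t *: v); split; [exact: gxs.1 | split].
by rewrite big_ord1 (addrC xs) addrK scalerA mulVf ?scale1r // lt0r_neq0.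
Qed.

Lemma zero_nodesP p :
  p \in zero_nodes <-> sign_zero W b (node_cell 0 m sg) (tag p) (tagged p).
Proof.
rewrite inE; split => [/eqP H0 x [Hx _]|Hz]; rewrite ?node_map_node_val.
  exact: (gxs.2 _ _ (leq0n _) (tag_le _) (ltn_ord _) H0 x Hx).
by apply/eqP; rewrite -node_map_node_val; apply: Hz; apply: generic_pt_relint gxs hd.
Qed.

End Dimension.
End Surjectivity.
End Network.

Local Close Scope ring_scope.

Theorem lemma16 (R : realType) (m : nat) (n : nat -> nat)
  (W : forall i, 'M[R]_(n i, n i.+1)) (b : forall i, 'rV[R]_(n i.+1)) :
  n m.+1 = 1%N ->
  generic W b m ->
  supertransversal W b m ->
  forall (C : set 'rV[R]_(n 0)) (k : nat),
    canon_cpx W b m C -> affdim C k ->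
    exists S : {set {i : 'I_m.+1 & 'I_(n i.+1)}},
      #|S| = (n 0 - k)%N /\
      forall pr, pr \in S <-> sign_zero W b C (tag pr) (tagged pr).
Proof.
move=> _ gen st C k HC [[x0 Cx0] [B [Bf HB]]].
have [sg EC] := cpx_node_cell W b 0 m C HC; subst C.
have [xs gxs] := exists_generic_pt W b 0 m sg (ex_intro _ x0 Cx0).
exists (zero_nodes W b m xs); split; last exact: zero_nodesP gxs.
have Hker v := iff_trans (iff_sym (HB v)) (dir_span_cell W b m xs sg gxs v).
have Hrk := rank_zero_lin_mx W b m xs gen st.
have := rank_leq_row (zero_lin_mx W b m xs).
by rewrite (row_free_kernel_rank Bf Hker) Hrk => /subKn.
Qed.
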